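(* For every $\epsilon\ge1$ and all sufficiently large $n$, there exists a binary $k$-PIR code $[N,n,k]^P$ with $k=\Theta(n^\epsilon)$ and $N=\mathcal{O}(n^{\epsilon^+})$, i.e., $N=\mathcal{O}(n^{\epsilon+\tau})$ for every $\tau>0$.
   Context: A binary $[N,n,k]^P$ code ($k$-PIR code) is a binary linear code of length $N$ encoding $n$ information bits such that for every information bit $x_i$ there exist $k$ mutually disjoint sets $R_{i,1},\dots,R_{i,k}\subseteq\{1,\dots,N\}$ such that, for each $j$, $x_i$ is a function of the codeword bits indexed by $R_{i,j}$. *)

From mathcomp Require Import all_boot all_algebra.
From Stdlib Require Import Reals.

Set Implicit Arguments.
Unset Strict Implicit.
Unset Printing Implicit Defensive.

Import GRing.Theory.
Local Open Scope ring_scope.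

(* A binary linear code of length N encoding n information bits, given by a
   generator matrix G : the information word x : 'rV_n is encoded as x *m G. *)

Definition recoverable_from (n N : nat) (G : 'M['F_2]_(n, N))
  (i : 'I_n) (R : {set 'I_N}) : Prop :=
  exists f : {ffun 'I_N -> 'F_2} -> 'F_2,
    forall x : 'rV['F_2]_n,
      x ord0 i = f [ffun t => if t \in R then (x *m G) ord0 t else 0].

Definition is_PIR_code (N n k : nat) (G : 'M['F_2]_(n, N)) : Prop :=
  forall i : 'I_n, exists R : 'I_k -> {set 'I_N},
    (forall j1 j2 : 'I_k, j1 != j2 -> [disjoint R j1 & R j2]) /\
    (forall j : 'I_k, @recoverable_from n N G i (R j)).

Definition PIR_exists (N n k : nat) : Prop :=
  exists G : 'M['F_2]_(n, N), @is_PIR_code N n k G.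

(* Let F be a field with q = 2^h elements, m >= 1, and S a subset of F with
   |S| = s and m (s - 1) + 2 <= q.  A message x in F_2^(S^m) is interpolated
   by P_x = sum_a x_a L_a, where L_a is the Lagrange basis of the grid S^m, and
   the codeword lists phi (P_x z) for all z in F^m, in r copies, where
   phi : F -> F_2 is additive with phi 1 = 1.  Restricted to a line, P_x is a
   polynomial of degree at most m (s - 1) < q - 1 in the line parameter, and
   sum_(t in F) t^j = 0 for j < q - 1, so x_a = phi (P_x a) is the sum of the
   codeword bits on any line through a with the point a removed.  The q^(m-1)
   lines through a with direction (1, w) meet only at a, which gives
   k = r q^(m-1) disjoint recovery sets for length N = r q^m.  Taking
   s ~ n^(1/m), q ~ m s and r ~ n^eps / q^(m-1) gives N <= C_m n^(eps + 1/m),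
   and letting m grow slowly with n drives the exponent overhead to 0. *)

From Pilot Require Import Defs.
From Stdlib Require Import Reals Lra ZArith.
From mathcomp Require Import all_boot all_algebra all_field zify.

Set Implicit Arguments.
Unset Strict Implicit.
Unset Printing Implicit Defensive.

Import GRing.Theory.
Local Open Scope ring_scope.

Definition is_PIR_family (K I C : finType) (G : I -> C -> 'F_2) : Prop :=
  forall i : I, exists R : K -> {set C},
    (forall j1 j2, j1 != j2 -> [disjoint R j1 & R j2]) /\
    (forall j, exists f : {ffun C -> 'F_2} -> 'F_2, forall x : I -> 'F_2,
       x i = f [ffun c => if c \in R j then \sum_i' x i' * G i' c else 0]).

Lemma extend_along_inj (R : pzSemiRingType) (I' I : finType) (e : I' -> I)
    (x : I' -> R) :
  injective e ->
  exists2 X : I -> R, forall i, X (e i) = x i &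
    forall g : I -> R, \sum_mu X mu * g mu = \sum_i x i * g (e i).
Proof.
move=> e_inj; exists (fun mu => \sum_i x i * (e i == mu)%:R) => [i|g].
  rewrite (bigD1 i) //= eqxx mulr1 big1 ?addr0 // => i' ne_i'i.
  by rewrite (inj_eq e_inj) (negbTE ne_i'i) mulr0.
under eq_bigr do rewrite mulr_suml.
rewrite exchange_big; apply: eq_bigr => i _ /=.
rewrite (bigD1 (e i)) //= eqxx mulr1 big1 ?addr0 // => mu ne_mu.
by rewrite eq_sym (negbTE ne_mu) mulr0 mul0r.
Qed.

Lemma PIR_exists_of_family (K I C : finType) (G : I -> C -> 'F_2) (n k : nat) :
  is_PIR_family K G -> (n <= #|I|)%N -> (k <= #|K|)%N -> PIR_exists #|C| n k.
Proof.
move=> famG le_nI le_kK.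
pose info (i : 'I_n) : I := enum_val (widen_ord le_nI i).
pose server (j : 'I_k) : K := enum_val (widen_ord le_kK j).
have info_inj : injective info by move=> ? ? /enum_val_inj [/val_inj].
have server_inj : injective server by move=> ? ? /enum_val_inj [/val_inj].
exists (\matrix_(i, c) G (info i) (enum_val c)) => i.
have [R [R_disj R_rec]] := famG (info i).
exists (fun j => enum_val @^-1: R (server j)); split.
  move=> j1 j2 ne_j; have := R_disj _ _ (contra_neq (@server_inj _ _) ne_j).
  by rewrite -!setI_eq0 -preimsetI => /eqP ->; rewrite preimset0.
move=> j; have [f Hf] := R_rec (server j).
exists (fun w => f [ffun c => w (enum_rank c)]) => x.
have [X XE Xsum] := extend_along_inj (fun i => x ord0 i) info_inj.
rewrite -XE Hf; congr f; apply/ffunP => c; rewrite !ffunE inE enum_rankK.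
case: ifP => // _; rewrite mxE Xsum; apply: eq_bigr => i' _.
by rewrite mxE enum_rankK.
Qed.

Section FinFieldPowerSums.
Variable F : finFieldType.

Lemma natr_card_finField : #|F|%:R = 0 :> F.
Proof.
have [p _ charFp] := finPcharP F.
have cardF : #|F| = (p ^ logn p #|F|)%N := card_pprimeChar charFp.
have logF_gt0 : (0 < logn p #|F|)%N.
  by move: cardF (finNzRing_gt1 F); case: (logn _ _) => // ->.
by apply/eqP; rewrite -(dvdn_pcharf charFp) cardF dvdn_exp.
Qed.

Lemma exists_expf_neq1 j :
  (0 < j < #|F|.-1)%N -> exists2 a : F, a != 0 & a ^+ j != 1.
Proof.
case/andP=> j_gt0 lt_j_F.
have /exists_inP[a] : [exists a in predC1 (0 : F), a ^+ j != 1].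
  apply: contraLR lt_j_F => /exists_inPn all_roots.
  rewrite -leqNgt -(cardC1 (0 : F)) cardE -ltnS -(size_XnsubC (1 : F) j_gt0).
  apply: max_poly_roots; last exact: enum_uniq.
    by rewrite -size_poly_eq0 size_XnsubC.
  apply/allP => a; rewrite mem_enum => /all_roots/negbNE/eqP a_j.
  by rewrite /root !hornerE a_j subrr.
by rewrite inE; exists a.
Qed.

Lemma sum_expr_finField j : (j < #|F|.-1)%N -> \sum_(t : F) t ^+ j = 0.
Proof.
case: (posnP j) => [-> _ | j_gt0 lt_j_F].
  by under eq_bigr do rewrite expr0; rewrite sumr_const natr_card_finField.
have [a nz_a a_j] := exists_expf_neq1 (introT andP (conj j_gt0 lt_j_F)).
have : \sum_(t : F) t ^+ j = a ^+ j * \sum_(t : F) t ^+ j.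
  rewrite mulr_sumr (reindex_inj (mulfI nz_a)) /=.
  by apply: eq_bigr => t _; rewrite exprMn.
move/eqP; rewrite -subr_eq0 -{1}(mul1r (\sum_t _)) -mulrBl mulf_eq0 subr_eq0.
by rewrite eq_sym (negbTE a_j) => /eqP.
Qed.

Lemma sum_horner_finField (p : {poly F}) :
  (size p < #|F|)%N -> \sum_(t : F) p.[t] = 0.
Proof.
move=> small_p; under eq_bigr do rewrite horner_coef.
rewrite exchange_big big1 // => i _; rewrite -mulr_sumr sum_expr_finField ?mulr0 //.
by rewrite -ltnS prednK ?(leq_ltn_trans (ltn_ord i)) // (ltnW (finNzRing_gt1 F)).
Qed.

End FinFieldPowerSums.

Lemma size_prod_leq (R : nzSemiRingType) (I : finType) (P : pred I)
    (F : I -> {poly R}) (d : nat) :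
  (forall i, P i -> (size (F i) <= d.+1)%N) ->
  (size (\prod_(i | P i) F i)%R <= (#|P| * d).+1)%N.
Proof.
move=> le_F; rewrite -sum_nat_const.
elim/big_rec2: _ => [|i n p Pi le_p]; first by rewrite size_poly1.
have := le_F i Pi; have := size_polyMleq (F i) p; lia.
Qed.

Lemma F2_cases (b : 'F_2) : b = 0 \/ b = 1.
Proof. by case: b => [[|[|//]]] ?; [left | right]; apply: val_inj. Qed.

Section GridCode.
Variable F : finFieldType.
Variables m' e : nat.
Local Notation m := m'.+1.
Local Notation grid := {ffun 'I_m -> 'I_e.+1}.
Hypothesis deg_lt_card : (m * e + 2 <= #|F|)%N.

Definition node (i : 'I_e.+1) : F := nth 0 (enum F) i.

Lemma node_inj : injective node.
Proof.
have lt_e_F : (e < #|F|)%N by have := leq_pmull e (ltn0Sn m'); lia.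
move=> i1 i2 /eqP; rewrite nth_uniq ?enum_uniq // -?cardE.
- by move/eqP/val_inj.
all: exact: leq_trans (ltn_ord _) lt_e_F.
Qed.

Definition lagr_poly (i : 'I_e.+1) : {poly F} :=
  \prod_(i' | i' != i) ((node i - node i')^-1 *: ('X - (node i')%:P)).

Lemma size_lagr_poly i : (size (lagr_poly i) <= e.+1)%N.
Proof.
apply: leq_trans (@size_prod_leq _ _ _ _ 1 _) _ => [i' _|].
  by apply: leq_trans (size_scale_leq _ _) _; rewrite size_XsubC.
by rewrite muln1 cardC1 card_ord.
Qed.

Lemma lagr_poly_node i i' : (lagr_poly i).[node i'] = (i == i')%:R.
Proof.
rewrite horner_prod; case: eqP => [<- | /eqP ne_ii'].
  rewrite big1 // => i'' ne_i''i; rewrite hornerZ hornerXsubC mulVf //.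
  by rewrite subr_eq0 (inj_eq node_inj) eq_sym.
by rewrite (bigD1 i') 1?eq_sym //= hornerZ hornerXsubC subrr mulr0 mul0r.
Qed.

Definition lagr (a : grid) (z : {ffun 'I_m -> F}) : F :=
  \prod_j (lagr_poly (a j)).[z j].

Definition grid_pt (a : grid) : {ffun 'I_m -> F} := [ffun j => node (a j)].

Lemma lagr_grid_pt a a' : lagr a (grid_pt a') = (a == a')%:R.
Proof.
rewrite /lagr; case: eqP => [<- | /eqP ne_aa'].
  by rewrite big1 // => j _; rewrite ffunE lagr_poly_node eqxx.
have [j ne_j] : exists j, a j != a' j.
  apply/existsP; apply: contraR ne_aa' => /existsPn eq_a.
  by apply/eqP/ffunP => j; apply/eqP/negbNE/eq_a.
by rewrite (bigD1 j) //= ffunE lagr_poly_node (negbTE ne_j) mul0r.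
Qed.

Definition line (b v : {ffun 'I_m -> F}) (t : F) : {ffun 'I_m -> F} :=
  [ffun j => b j + t * v j].

Lemma lagr_line_poly a b v :
  exists2 p : {poly F}, (size p <= (m * e).+1)%N &
    forall t, p.[t] = lagr a (line b v t).
Proof.
exists (\prod_j (lagr_poly (a j) \Po ((v j)%:P * 'X + (b j)%:P))) => [|t].
  rewrite -[m in (m * e)%N]card_ord; apply: size_prod_leq => j _.
  apply: leq_trans (size_comp_poly_leq _ _) _.
  have size_aff : (size ((v j)%:P * 'X + (b j)%:P)%R <= 2)%N.
    by rewrite size_MXaddC; case: ifP => // _; rewrite ltnS size_polyC leq_b1.
  have := size_lagr_poly (a j); nia.
rewrite horner_prod; apply: eq_bigr => j _.
by rewrite horner_comp !hornerE ffunE addrC mulrC.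
Qed.

Lemma sum_lagr_line a b v : \sum_t lagr a (line b v t) = 0.
Proof.
have [p size_p pE] := lagr_line_poly a b v.
under eq_bigr do rewrite -pE.
by apply: sum_horner_finField; apply: leq_ltn_trans size_p _; rewrite -addn2.
Qed.

Variable phi : F -> 'F_2.
Hypothesis phiD : {morph phi : u v / u + v}.
Hypothesis phi1 : phi 1 = 1.

Lemma phi0 : phi 0 = 0.
Proof. by apply: (addrI (phi 0)); rewrite -phiD !addr0. Qed.

Lemma phiN u : phi (- u) = - phi u.
Proof. by apply: (addrI (phi u)); rewrite -phiD !subrr phi0. Qed.

Lemma phi_sum (I : Type) (s : seq I) (P : pred I) (y : I -> F) :
  phi (\sum_(i <- s | P i) y i) = \sum_(i <- s | P i) phi (y i).
Proof. exact: (big_morph phi phiD phi0). Qed.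

Definition liftF2 (b : 'F_2) : F := if b == 0 then 0 else 1.

Lemma phi_liftF2_mul b y : phi (liftF2 b * y) = b * phi y.
Proof.
by case: (F2_cases b) => ->; rewrite /liftF2 ?eqxx ?oner_eq0 ?mul0r ?phi0 ?mul1r.
Qed.

Lemma phi_liftF2 b : phi (liftF2 b) = b.
Proof. by rewrite -[liftF2 b]mulr1 phi_liftF2_mul phi1 mulr1. Qed.

Variable r : nat.
Local Notation coord := ('I_r * {ffun 'I_m -> F})%type.
Local Notation server := ('I_r * {ffun 'I_m' -> F})%type.

Definition encode (x : grid -> 'F_2) (z : {ffun 'I_m -> F}) : F :=
  \sum_a liftF2 (x a) * lagr a z.

Definition gen (a : grid) (c : coord) : 'F_2 := phi (lagr a c.2).

Lemma sum_gen x c : \sum_a x a * gen a c = phi (encode x c.2).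
Proof. by rewrite phi_sum; apply: eq_bigr => a _; rewrite phi_liftF2_mul. Qed.

Lemma encode_grid_pt x a : encode x (grid_pt a) = liftF2 (x a).
Proof.
rewrite /encode (bigD1 a) //= lagr_grid_pt eqxx mulr1 big1 ?addr0 // => a' ne_a'.
by rewrite lagr_grid_pt (negbTE ne_a') mulr0.
Qed.

Definition dir (w : {ffun 'I_m' -> F}) : {ffun 'I_m -> F} :=
  [ffun j => if unlift ord0 j is Some j' then w j' else 1].

Lemma encode_line x a w :
  liftF2 (x a) = - \sum_(t | t != 0) encode x (line (grid_pt a) (dir w) t).
Proof.
have line0 : line (grid_pt a) (dir w) 0 = grid_pt a.
  by apply/ffunP => j; rewrite ffunE mul0r addr0.
have : \sum_t encode x (line (grid_pt a) (dir w) t) = 0.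
  rewrite exchange_big big1 // => a' _.
  by rewrite -mulr_sumr sum_lagr_line mulr0.
by rewrite (bigD1 0) //= line0 encode_grid_pt => /eqP; rewrite addr_eq0 => /eqP.
Qed.

Definition recovery_set (a : grid) (s : server) : {set coord} :=
  [set (s.1, line (grid_pt a) (dir s.2) t) | t in predC1 0].

Lemma recovery_set_disjoint a s s' :
  s != s' -> [disjoint recovery_set a s & recovery_set a s'].
Proof.
case: s s' => [i w] [i' w'] ne_s; rewrite -setI_eq0; apply/eqP/setP => c.
rewrite !inE; apply/negP => /andP[/imsetP[t t_nz ->] /imsetP[t' _ [eq_i eq_pt]]].
have eq_t : t = t'.
  have := congr1 (fun z : {ffun 'I_m -> F} => z ord0) eq_pt.
  by rewrite /= !ffunE unlift_none !mulr1 => /addrI.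
case/eqP: ne_s; congr pair => //; apply/ffunP => j; subst t'.
have := congr1 (fun z : {ffun 'I_m -> F} => z (lift ord0 j)) eq_pt.
rewrite /= !ffunE liftK.
by move/addrI/mulfI; apply.
Qed.

Lemma gen_PIR : is_PIR_family server gen.
Proof.
move=> a; exists (recovery_set a); split; first exact: recovery_set_disjoint.
move=> s.
exists (fun g => - \sum_(t | t != 0) g (s.1, line (grid_pt a) (dir s.2) t)) => x. rewrite -[x a]phi_liftF2 (encode_line x a s.2) phiN phi_sum; congr (- _).
by apply: eq_bigr => t t_nz; rewrite ffunE imset_f ?inE // sum_gen.
Qed.

End GridCode.

Lemma F2_functional (F : finFieldType) :
  2 \in [pchar F] ->
  exists2 phi : F -> 'F_2, {morph phi : u v / u + v} & phi 1 = 1.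
Proof.
move=> charF2; have [v2r v2r_lin v2r_bij] := pprimeChar_vectAxiom charF2.
have v2rD u v : v2r (u + v) = v2r u + v2r v.
  by have := v2r_lin 1 u v; rewrite !scale1r.
have [j v2r1_j] : exists j, v2r 1 ord0 j != 0.
  apply/existsP; apply: contraT => /existsPn v2r1_0.
  have v2r0 : v2r 0 = 0 by apply: (addrI (v2r 0)); rewrite -v2rD !addr0.
  have v2r1 : v2r 1 = v2r 0.
    by rewrite v2r0; apply/rowP => j; rewrite mxE (eqP (negbNE (v2r1_0 j))).
  by have := bij_inj v2r_bij v2r1; move/eqP; rewrite oner_eq0.
exists (fun y => v2r y ord0 j) => [u v|]; first by rewrite v2rD mxE.
by case: (F2_cases (v2r 1 ord0 j)) v2r1_j => ->.
Qed.

Lemma PIR_exists_char2 (F : finFieldType) (m' e r n k : nat) :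
  2 \in [pchar F] -> (m'.+1 * e + 2 <= #|F|)%N ->
  (n <= e.+1 ^ m'.+1)%N -> (k <= r * #|F| ^ m')%N ->
  PIR_exists (r * #|F| ^ m'.+1) n k.
Proof.
move=> charF2 le_me_F le_n le_k; have [phi phiD phi1] := F2_functional charF2.
have := PIR_exists_of_family (gen_PIR le_me_F phiD phi1 r).
by rewrite !card_prod !card_ffun !card_ord; apply.
Qed.

Lemma PIR_exists_pow2 (h m' e r n k : nat) :
  (0 < h)%N -> (m'.+1 * e + 2 <= 2 ^ h)%N ->
  (n <= e.+1 ^ m'.+1)%N -> (k <= r * (2 ^ h) ^ m')%N ->
  PIR_exists (r * (2 ^ h) ^ m'.+1) n k.
Proof.
move=> h_gt0; have [F charF2 <-] := pPrimePowerField (erefl (prime 2)) h_gt0.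
exact: PIR_exists_char2.
Qed.

Local Close Scope ring_scope.
Local Open Scope R_scope.

Lemma INR_leq m n : (m <= n)%N -> INR m <= INR n.
Proof. by move/leP; apply: le_INR. Qed.

Lemma INR_addn m n : INR (m + n) = INR m + INR n.
Proof. exact: plus_INR. Qed.

Lemma INR_muln m n : INR (m * n) = INR m * INR n.
Proof. exact: mult_INR. Qed.

Lemma INR_expn m n : INR (m ^ n) = INR m ^ n.
Proof. by elim: n => [|n IHn]; rewrite ?expn0 // expnS INR_muln IHn. Qed.

Lemma Rpower_ge1 x y : 1 <= x -> 0 <= y -> 1 <= Rpower x y.
Proof. by move=> x_ge1 y_ge0; rewrite -(Rpower_O x); [apply: Rle_Rpower | lra]. Qed.

Lemma Rpower_invn_pow x m : 0 < x -> (0 < m)%N -> Rpower x (/ INR m) ^ m = x.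
Proof.
move=> x_gt0 m_gt0; rewrite -Rpower_pow; last exact: exp_pos.
rewrite Rpower_mult Rinv_l ?Rpower_1 //.
by apply: not_0_INR; case: m m_gt0.
Qed.

Lemma Rpower_pow_invn x m : 0 < x -> (0 < m)%N -> Rpower (x ^ m) (/ INR m) = x.
Proof.
move=> x_gt0 m_gt0; rewrite -Rpower_pow // Rpower_mult Rinv_r ?Rpower_1 //.
by apply: not_0_INR; case: m m_gt0.
Qed.

Definition nat_ceil (x : R) : nat := Z.to_nat (up x).

Lemma nat_ceil_bounds x : 1 <= x -> x <= INR (nat_ceil x) <= 2 * x.
Proof.
move=> x_ge1; have [up_gt up_le] := archimed x.
have up_ge0 : Z.le 0 (up x) by apply: le_IZR; lra.
by rewrite /nat_ceil INR_IZR_INZ Z2Nat.id //; lra.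
Qed.

Section Asymptotics.
Variable eps : R.
Hypothesis eps_ge1 : 1 <= eps.

Definition pir_k (n : nat) : nat := nat_ceil (Rpower (INR n) eps).

Lemma pir_k_bounds n : (1 <= n)%N ->
  Rpower (INR n) eps <= INR (pir_k n) <= 2 * Rpower (INR n) eps.
Proof.
move=> n_ge1; apply: nat_ceil_bounds; apply: Rpower_ge1; last lra.
exact: (INR_leq n_ge1).
Qed.

Definition side (n m' : nat) : nat := nat_ceil (Rpower (INR n) (/ INR m'.+1)).

Lemma side_bounds n m' : (1 <= n)%N ->
  [/\ (0 < side n m')%N, (n <= side n m' ^ m'.+1)%N
    & INR (side n m') <= 2 * Rpower (INR n) (/ INR m'.+1)].
Proof.
move=> n_ge1; have n_ge1R : 1 <= INR n := INR_leq n_ge1.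
have m_gt0 : 0 < / INR m'.+1 by apply/Rinv_0_lt_compat/lt_0_INR/ltP.
have [root_le le_2root] : Rpower (INR n) (/ INR m'.+1) <= INR (side n m') <=
    2 * Rpower (INR n) (/ INR m'.+1).
  by apply/nat_ceil_bounds/Rpower_ge1; lra.
have n_le : (n <= side n m' ^ m'.+1)%N.
  apply/leP/INR_le; rewrite INR_expn -[INR n](@Rpower_invn_pow _ m'.+1) //; last lra.
  by apply: pow_incr; split=> //; apply/Rlt_le/exp_pos.
split=> //; move: n_le; case: (side n m') => //; rewrite exp0n //; lia.
Qed.

Definition field_log (n m' : nat) : nat := up_log 2 (m'.+1 * side n m' + 2).

Lemma field_log_bounds n m' : (1 <= n)%N ->
  [/\ (0 < field_log n m')%N, (m'.+1 * side n m' + 2 <= 2 ^ field_log n m')%N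
    & (2 ^ field_log n m' <= 4 * (m'.+1 * side n m'))%N].
Proof.
move=> n_ge1; have [side_gt0 _ _] := side_bounds m' n_ge1.
have h_gt0 : (0 < field_log n m')%N by rewrite up_log_gt0 addn2.
split=> //; first exact: up_logP.
have := @up_log_gtn 2 (m'.+1 * side n m' + 2) isT.
rewrite -/(field_log n m') addn2 => /(_ isT).
have : (0 < m'.+1 * side n m')%N by rewrite muln_gt0.
by case: (field_log n m') h_gt0 => // h _ /=; rewrite expnS; lia.
Qed.

Definition copies (n m' : nat) : nat := (pir_k n %/ (2 ^ field_log n m') ^ m').+1.

Definition pir_N (n m' : nat) : nat := (copies n m' * (2 ^ field_log n m') ^ m'.+1)%N.

Lemma pir_N_PIR n m' : (1 <= n)%N -> PIR_exists (pir_N n m') n (pir_k n).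
Proof.
move=> n_ge1; have [side_gt0 n_le _] := side_bounds m' n_ge1.
have [h_gt0 field_ge _] := field_log_bounds m' n_ge1.
apply: (@PIR_exists_pow2 _ _ (side n m').-1) => //.
- by apply: leq_trans field_ge; rewrite leq_add2r leq_mul2l leq_pred orbT.
- by rewrite prednK.
- by apply/ltnW/ltn_ceil; rewrite !expn_gt0.
Qed.

Lemma pir_N_leq n m' :
  (pir_N n m' <= pir_k n * 2 ^ field_log n m' + (2 ^ field_log n m') ^ m'.+1)%N.
Proof.
rewrite /pir_N /copies -addn1 expnSr mulnA mulnDl mul1n mulnDl leq_add2r leq_mul2r.
by rewrite leq_divM orbT.
Qed.

Definition len_const (m : nat) : nat := (16 * m + (8 * m) ^ m)%N.

Lemma pir_N_le n m' : (1 <= n)%N ->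
  INR (pir_N n m') <= INR (len_const m'.+1) * Rpower (INR n) (eps + / INR m'.+1).
Proof.
move=> n_ge1; have n_ge1R : 1 <= INR n := INR_leq n_ge1.
have m_gt0 : 0 < INR m'.+1 by apply/lt_0_INR/ltP.
have [_ le_k] := pir_k_bounds n_ge1.
have [_ _ le_s] := side_bounds m' n_ge1.
have [_ _ le_q] := field_log_bounds m' n_ge1.
set P := Rpower (INR n) (/ INR m'.+1) in le_s *.
set E := Rpower (INR n) eps in le_k *.
set q := (2 ^ field_log n m')%N in le_q *.
have P_ge1 : 1 <= P by apply: Rpower_ge1 => //; apply/Rlt_le/Rinv_0_lt_compat.
have n_le_E : INR n <= E.
  by rewrite /E -{1}(Rpower_1 (INR n)); [apply: Rle_Rpower | lra].
have q_ge0 : 0 <= INR q := pos_INR q.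
have le_qR : INR q <= 8 * INR m'.+1 * P.
  move/INR_leq: le_q; rewrite !INR_muln.
  have -> : INR 4 = 4 by rewrite /=; lra.
  by move: (Rmult_le_compat_l _ _ _ (Rlt_le _ _ m_gt0) le_s); lra.
have le_kq : INR (pir_k n) * INR q <= 16 * INR m'.+1 * (E * P).
  by move: (Rmult_le_compat _ _ _ _ (pos_INR _) q_ge0 le_k le_qR); lra.
have le_qm : INR q ^ m'.+1 <= (8 * INR m'.+1) ^ m'.+1 * (E * P).
  apply: Rle_trans (pow_incr _ _ m'.+1 (conj q_ge0 le_qR)) _.
  rewrite Rpow_mult_distr /P Rpower_invn_pow //; last lra.
  rewrite -/P; apply: Rmult_le_compat_l; first by apply: pow_le; lra.
  by nra.
apply: Rle_trans (INR_leq (pir_N_leq n m')) _; rewrite -/q.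
rewrite Rpower_plus -/E -/P INR_addn INR_muln (INR_expn q) /len_const.
rewrite INR_addn INR_muln INR_expn INR_muln.
have -> : INR 16 = 16 by rewrite /=; lra.
have -> : INR 8 = 8 by rewrite /=; lra.
lra.
Qed.

Definition len_threshold (m : nat) : nat := (len_const m ^ m)%N.

Lemma pir_N_le_threshold n m' : (1 <= n)%N -> (len_threshold m'.+1 <= n)%N ->
  INR (pir_N n m') <= Rpower (INR n) (eps + 2 / INR m'.+1).
Proof.
move=> n_ge1 le_Tn; apply: Rle_trans (pir_N_le m' n_ge1) _.
have m_gt0 : 0 < INR m'.+1 by apply/lt_0_INR/ltP.
have le_D : INR (len_const m'.+1) <= Rpower (INR n) (/ INR m'.+1).
  have D_gt0 : 0 < INR (len_const m'.+1) by apply/lt_0_INR/ltP; rewrite /len_const; lia.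
  rewrite -{1}(@Rpower_pow_invn _ m'.+1 D_gt0) //.
  apply: Rle_Rpower_l; first by apply/Rlt_le/Rinv_0_lt_compat.
  by split; [apply: pow_lt | rewrite -INR_expn; apply: INR_leq].
have -> : eps + 2 / INR m'.+1 = / INR m'.+1 + (eps + / INR m'.+1) by field; lra.
rewrite [Rpower _ (_ + (_ + _))]Rpower_plus.
by apply: Rmult_le_compat_r => //; apply/Rlt_le/exp_pos.
Qed.

Definition code_dim (n : nat) : nat :=
  \max_(m' < n | (len_threshold m'.+1 <= n)%N) m'.

Lemma code_dim_spec n m0 : (len_threshold m0.+1 <= n)%N ->
  (m0 <= code_dim n)%N /\ (len_threshold (code_dim n).+1 <= n)%N.
Proof.
move=> le_Tn; have lt_m0n : (m0 < n)%N.
  by apply: leq_trans le_Tn; apply/ltnW/ltn_expl; rewrite /len_const; lia.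
split; first exact: (@leq_bigmax_cond _ _ _ (Ordinal lt_m0n)).
pose A := [pred m' : 'I_n | len_threshold m'.+1 <= n]%N.
have A_gt0 : (0 < #|A|)%N by apply/card_gt0P; exists (Ordinal lt_m0n).
have [m1 A_m1 max_m1] := eq_bigmax_cond (@nat_of_ord n) A_gt0.
by have -> : code_dim n = m1 by rewrite -max_m1; apply: eq_bigl.
Qed.

Lemma pir_N_eventually tau : 0 < tau ->
  exists n1, forall n, (n1 <= n)%N ->
    INR (pir_N n (code_dim n)) <= Rpower (INR n) (eps + tau).
Proof.
move=> tau_gt0.
have [[|m0] [inv_lt /ltP m_gt0]] := archimed_cor1 (tau / 2) ltac:(lra); first by [].
exists (maxn 1 (len_threshold m0.+1)) => n; rewrite geq_max => /andP[n_ge1 le_Tn].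
have [le_m0 le_T] := code_dim_spec le_Tn.
apply: Rle_trans (pir_N_le_threshold n_ge1 le_T) _.
apply: Rle_Rpower; first exact: (INR_leq n_ge1).
have : / INR (code_dim n).+1 <= / INR m0.+1.
  by apply: Rinv_le_contravar; [apply/lt_0_INR/ltP | apply: INR_leq].
rewrite /Rdiv; lra.
Qed.

End Asymptotics.

(* As in [Defs], which loads [Reals] after MathComp, [%R] denotes [R_scope]. *)
Delimit Scope R_scope with R.

Theorem theorem5 (eps : R) (heps : (1 <= eps)%R) :
  exists (k N : nat -> nat) (n0 : nat) (c1 c2 : R),
    (0 < c1)%R /\ (0 < c2)%R /\
    (forall n : nat, le n0 n ->
       PIR_exists (N n) n (k n) /\
       (c1 * Rpower (INR n) eps <= INR (k n))%R /\
       (INR (k n) <= c2 * Rpower (INR n) eps)%R) /\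
    (forall tau : R, (0 < tau)%R ->
       exists (C : R) (n1 : nat), forall n : nat, le n1 n ->
         (INR (N n) <= C * Rpower (INR n) (eps + tau))%R).
Proof.
exists (pir_k eps), (fun n => pir_N eps n (code_dim n)), 1%nat, 1, 2.
split; first lra; split; first lra; split.
  move=> n /leP n_ge1; split; first exact: pir_N_PIR.
  by have := pir_k_bounds heps n_ge1; lra.
move=> tau tau_gt0; have [n1 le_N] := pir_N_eventually heps tau_gt0.
by exists 1, n1 => n /leP le_n1n; rewrite Rmult_1_l; apply: le_N.
Qed.
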